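(* Let $n\in\{2,3,\ldots\}$ and $p\in(0,1)$, let $K$ be the Erdős–Rényi random graph on vertex set $\{1,\ldots,n\}$ with edge probability $p$, and let $Y$ be the number of isolated vertices of $K$, with mean $\mu=n(1-p)^{n-1}$ and variance $\sigma^2=n(1-p)^{n-1}\big(1+np(1-p)^{n-2}-(1-p)^{n-2}\big)$. Let $M(\theta)=E\exp(\theta(Y-\mu)/\sigma)$. Define, for real $s$, $$\gamma_s=e^s(pe^s+1-p)^{n-2}(npe^s+1-p)+(n-1)p+1,\qquad H(\theta)=\frac{\mu}{2\sigma^2}\int_0^\theta s\,\gamma_{s/\sigma}\,ds.$$ Then: (i) $M(\theta)\le \exp H(\theta)$ for all $\theta\ge 0$, and for all $t>0$, $$P\Big(\frac{Y-\mu}{\sigma}\ge t\Big)\le \inf_{\theta\ge 0}\exp(-\theta t+H(\theta)).$$ (ii) $M(\theta)\le \exp(\mu\theta^2/\sigma^2)$ for all $\theta\le 0$, and for all $t>0$, $$P\Big(\frac{Y-\mu}{\sigma}\le -t\Big)\le \exp\Big(-\frac{t^2\sigma^2}{4\mu}\Big).$$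
   Context: The Erdős–Rényi random graph on $\{1,\ldots,n\}$ with edge probability $p$: the edge indicators $X_{uv}$, $u\ne v$ (unordered pairs), are independent Bernoulli($p$). A vertex is isolated if it has degree $0$. (The stated formulas for $\mu$ and $\sigma^2$ are the mean and variance of $Y$; $\sigma>0$.) *)

From Stdlib Require Import Reals Lra List Arith Bool.
Import ListNotations.
Open Scope R_scope.

(* Vertex set {0,...,n-1} (a relabeling of {1,...,n}).
   Unordered pairs {i,j}, i<j, listed as (i,j). *)
Definition edges (n : nat) : list (nat * nat) :=
  flat_map (fun j => map (fun i => (i, j)) (seq 0 j)) (seq 0 n).

(* All 0/1 vectors of length k: a graph is the vector of its edge
   indicators, aligned with [edges n]. *)
Fixpoint bits (k : nat) : list (list bool) :=
  match k with
  | O => [[]]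
  | S k' => map (cons true) (bits k') ++ map (cons false) (bits k')
  end.

Definition weight (p : R) (g : list bool) : R :=
  fold_right (fun (b : bool) (acc : R) => (if b then p else 1 - p) * acc) 1 g.

Definition present_edges (n : nat) (g : list bool) : list (nat * nat) :=
  map fst (filter snd (combine (edges n) g)).

Definition isolated (n : nat) (g : list bool) (v : nat) : bool :=
  forallb (fun e => andb (negb (Nat.eqb (fst e) v)) (negb (Nat.eqb (snd e) v)))
          (present_edges n g).

Definition Ycount (n : nat) (g : list bool) : R :=
  INR (length (filter (isolated n g) (seq 0 n))).

Definition Expect (n : nat) (p : R) (f : list bool -> R) : R :=
  fold_right Rplus 0
    (map (fun g => weight p g * f g) (bits (length (edges n)))).

Definition mu (n : nat) (p : R) : R := INR n * (1 - p) ^ (n - 1).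

Definition sigma2 (n : nat) (p : R) : R :=
  INR n * (1 - p) ^ (n - 1) *
  (1 + INR n * p * (1 - p) ^ (n - 2) - (1 - p) ^ (n - 2)).

Definition sigma (n : nat) (p : R) : R := sqrt (sigma2 n p).

Definition Zstd (n : nat) (p : R) (g : list bool) : R :=
  (Ycount n g - mu n p) / sigma n p.

Definition M (n : nat) (p : R) (theta : R) : R :=
  Expect n p (fun g => exp (theta * Zstd n p g)).

Definition gamma (n : nat) (p : R) (s : R) : R :=
  exp s * (p * exp s + 1 - p) ^ (n - 2) * (INR n * p * exp s + 1 - p)
  + INR (n - 1) * p + 1.

Definition H_integrand (n : nat) (p : R) (s : R) : R :=
  s * gamma n p (s / sigma n p).

Definition H (n : nat) (p theta : R)
  (pr : Riemann_integrable (H_integrand n p) 0 theta) : R :=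
  mu n p / (2 * sigma2 n p) * RiemannInt pr.

From Pilot Require Import Defs.
From Stdlib Require Import Reals Lra Lia List Bool.
From Coquelicot Require Import Coquelicot.
Import ListNotations.
Open Scope R_scope.

(** The size-bias identity
    [E[Y h] = (1-p)^(n-1) sum_v E[h(g with the edges at v deleted)]] reduces
    everything to comparing [Y] with [Y] after isolating one vertex [v]:
    - for [u >= 0], resampling the edges at [v] gives a coupling in which the
      graph with [v] isolated has at least as many isolated vertices, with a mean
      gap at most [1 + (n-1)p]; the trapezoid bound for [exp], Chebyshev's
      association inequality and Jensen give
      [E[Y e^(uY)] <= mu (1 + u gamma_u / 2) E[e^(uY)]];
    - for [u <= 0], [e^x >= 1 + x] and the combinatorial fact that deleting
      the edges at [v], summed over [v], creates at most [2n] isolated vertices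
      give [E[Y e^(uY)] >= mu (1 + 2u) E[e^(uY)]].
    With [u = theta/sigma] these are bounds on the slope of [ln M]; integrating
    them from 0 yields the mgf bounds, and Chernoff's bound yields the tails. *)

(** [Reals] exports an unrelated [sigma] (finite sums); we mean the standard deviation. *)
Local Notation sigma := Defs.sigma.

Definition sumL {A : Type} (l : list A) (f : A -> R) : R :=
  fold_right (fun a acc => f a + acc) 0 l.

Lemma sumL_app {A : Type} (l1 l2 : list A) (f : A -> R) :
  sumL (l1 ++ l2) f = sumL l1 f + sumL l2 f.
Proof. induction l1 as [|a l1 IH]; simpl; [lra | rewrite IH; lra]. Qed.

Lemma sumL_map {A B : Type} (l : list A) (h : A -> B) (f : B -> R) :
  sumL (map h l) f = sumL l (fun a => f (h a)).
Proof. induction l as [|a l IH]; simpl; [reflexivity | now rewrite IH]. Qed.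

Lemma sumL_ext {A : Type} (l : list A) (f g : A -> R) :
  (forall a, In a l -> f a = g a) -> sumL l f = sumL l g.
Proof.
  induction l as [|a l IH]; simpl; intros Hfg; [reflexivity|].
  rewrite Hfg, IH by auto; reflexivity.
Qed.

Lemma sumL_le {A : Type} (l : list A) (f g : A -> R) :
  (forall a, In a l -> f a <= g a) -> sumL l f <= sumL l g.
Proof.
  induction l as [|a l IH]; simpl; intros Hfg; [lra|].
  apply Rplus_le_compat; auto.
Qed.

Lemma sumL_plus {A : Type} (l : list A) (f g : A -> R) :
  sumL l (fun a => f a + g a) = sumL l f + sumL l g.
Proof. induction l as [|a l IH]; simpl; [lra | rewrite IH; lra]. Qed.

Lemma sumL_scal {A : Type} (l : list A) (c : R) (f : A -> R) :
  sumL l (fun a => c * f a) = c * sumL l f.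
Proof. induction l as [|a l IH]; simpl; [lra | rewrite IH; lra]. Qed.

Lemma sumL_minus {A : Type} (l : list A) (f g : A -> R) :
  sumL l (fun a => f a - g a) = sumL l f - sumL l g.
Proof. induction l as [|a l IH]; simpl; [lra | rewrite IH; lra]. Qed.

Lemma sumL_const {A : Type} (l : list A) (c : R) :
  sumL l (fun _ => c) = c * INR (length l).
Proof.
  induction l as [|a l IH]; simpl sumL; simpl length; [simpl; lra|].
  rewrite S_INR; simpl in *; rewrite IH; ring.
Qed.

Lemma sumL_swap {A B : Type} (l1 : list A) (l2 : list B) (F : A -> B -> R) :
  sumL l1 (fun a => sumL l2 (F a)) = sumL l2 (fun b => sumL l1 (fun a => F a b)).
Proof.
  induction l1 as [|a l1 IH]; simpl.
  - rewrite sumL_const; ring.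
  - rewrite IH, <- sumL_plus; reflexivity.
Qed.

Definition indb (b : bool) : R := if b then 1 else 0.

Lemma INR_length_filter {A : Type} (f : A -> bool) (l : list A) :
  INR (length (filter f l)) = sumL l (fun a => indb (f a)).
Proof.
  induction l as [|a l IH]; [reflexivity|]; simpl.
  unfold indb at 1; destruct (f a); simpl length; [rewrite S_INR|]; rewrite IH; ring.
Qed.

Fixpoint Eb (p : R) (k : nat) (f : list bool -> R) : R :=
  match k with
  | O => f []
  | S k' => p * Eb p k' (fun g => f (true :: g)) + (1 - p) * Eb p k' (fun g => f (false :: g))
  end.

Lemma Expect_Eb (n : nat) (p : R) (f : list bool -> R) :
  Expect n p f = Eb p (length (edges n)) f.
Proof.
  unfold Expect. generalize (length (edges n)) as k; intros k.
  assert (Hsum : forall l, fold_right Rplus 0 (map (fun g => weight p g * f g) l)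
                           = sumL l (fun g => weight p g * f g)).
  { induction l as [|g l IH]; simpl; [reflexivity | now rewrite IH]. }
  rewrite Hsum; clear Hsum; revert f.
  induction k as [|k IH]; intros f; simpl; [unfold weight; simpl; lra|].
  rewrite sumL_app, !sumL_map, <- IH, <- IH, <- !sumL_scal.
  f_equal; apply sumL_ext; intros; simpl; ring.
Qed.

Section Expectation.
Variable p : R.

Lemma Eb_ext (k : nat) (f g : list bool -> R) :
  (forall x, length x = k -> f x = g x) -> Eb p k f = Eb p k g.
Proof.
  revert f g; induction k as [|k IH]; intros f g Hfg; simpl; [now apply Hfg|].
  rewrite (IH (fun x => f (true :: x)) (fun x => g (true :: x))),
          (IH (fun x => f (false :: x)) (fun x => g (false :: x)));
    auto; intros x Hx; apply Hfg; simpl; lia.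
Qed.

Lemma Eb_le (k : nat) (f g : list bool -> R) : 0 <= p <= 1 ->
  (forall x, length x = k -> f x <= g x) -> Eb p k f <= Eb p k g.
Proof.
  intros Hp; revert f g; induction k as [|k IH]; intros f g Hfg; simpl; [now apply Hfg|].
  apply Rplus_le_compat; apply Rmult_le_compat_l; try lra; apply IH;
    intros x Hx; apply Hfg; simpl; lia.
Qed.

Lemma Eb_plus (k : nat) (f g : list bool -> R) :
  Eb p k (fun x => f x + g x) = Eb p k f + Eb p k g.
Proof. revert f g; induction k as [|k IH]; intros; simpl; [|rewrite !IH]; ring. Qed.

Lemma Eb_scal (k : nat) (c : R) (f : list bool -> R) :
  Eb p k (fun x => c * f x) = c * Eb p k f.
Proof. revert f; induction k as [|k IH]; intros; simpl; [|rewrite !IH]; ring. Qed.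

Lemma Eb_const (k : nat) (c : R) : Eb p k (fun _ => c) = c.
Proof. induction k as [|k IH]; simpl; [|rewrite IH]; ring. Qed.

Lemma Eb_minus (k : nat) (f g : list bool -> R) :
  Eb p k (fun x => f x - g x) = Eb p k f - Eb p k g.
Proof.
  rewrite (Eb_ext k _ (fun x => f x + (-1) * g x)) by (intros; ring).
  rewrite Eb_plus, Eb_scal; ring.
Qed.

Lemma Eb_sumL {A : Type} (k : nat) (l : list A) (F : A -> list bool -> R) :
  Eb p k (fun g => sumL l (fun a => F a g)) = sumL l (fun a => Eb p k (F a)).
Proof. induction l as [|a l IH]; simpl; [apply Eb_const | rewrite Eb_plus, IH; reflexivity]. Qed.

Lemma Eb_pos (k : nat) (f : list bool -> R) : 0 <= p <= 1 ->
  (forall x, 0 < f x) -> 0 < Eb p k f.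
Proof.
  intros Hp; revert f; induction k as [|k IH]; intros f Hf; simpl; [apply Hf|].
  pose proof (IH (fun x => f (true :: x)) (fun x => Hf _)).
  pose proof (IH (fun x => f (false :: x)) (fun x => Hf _)). nra.
Qed.

Lemma Eb_jensen (k : nat) (X : list bool -> R) : 0 <= p <= 1 ->
  exp (Eb p k X) <= Eb p k (fun s => exp (X s)).
Proof.
  intros Hp. set (c := Eb p k X).
  apply Rle_trans with (Eb p k (fun s => exp c + exp c * (X s - c))).
  - rewrite Eb_plus, Eb_scal, Eb_minus, !Eb_const; fold c; lra.
  - apply Eb_le; auto; intros s _.
    replace (X s) with (c + (X s - c)) at 2 by ring; rewrite exp_plus.
    pose proof (exp_ineq1_le (X s - c)); pose proof (exp_pos c); nra.
Qed.

Lemma Eb_chebyshev (k : nat) (F G : list bool -> R) : 0 <= p <= 1 ->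
  (forall s s', (F s - F s') * (G s - G s') <= 0) ->
  Eb p k (fun s => F s * G s) <= Eb p k F * Eb p k G.
Proof.
  intros Hp Hopp.
  assert (Hdouble : Eb p k (fun s => Eb p k (fun s' => (F s - F s') * (G s - G s'))) <= 0).
  { rewrite <- (Eb_const k 0); apply Eb_le; auto; intros s _.
    rewrite <- (Eb_const k 0); apply Eb_le; auto. }
  rewrite (Eb_ext k _ (fun s => F s * G s + (- Eb p k G) * F s + (- Eb p k F) * G s
                                + Eb p k (fun s' => F s' * G s'))) in Hdouble.
  2:{ intros s _.
      rewrite (Eb_ext k _ (fun s' => F s * G s + (- F s) * G s' + (- G s) * F s' + F s' * G s'))
        by (intros; ring).
      rewrite !Eb_plus, !Eb_scal, Eb_const; ring. }
  rewrite !Eb_plus, !Eb_scal, Eb_const in Hdouble; lra.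
Qed.

End Expectation.

Notation lab := (nat * nat)%type.

Fixpoint allfalse (P : lab -> bool) (L : list lab) (g : list bool) : bool :=
  match L, g with
  | l :: L', b :: g' => negb (P l && b) && allfalse P L' g'
  | _, _ => true
  end.

Fixpoint clearP (P : lab -> bool) (L : list lab) (g : list bool) : list bool :=
  match L, g with
  | l :: L', b :: g' => (if P l then false else b) :: clearP P L' g'
  | _, _ => []
  end.

Fixpoint mergeP (P : lab -> bool) (L : list lab) (g s : list bool) : list bool :=
  match L, g, s with
  | l :: L', b :: g', c :: s' => (if P l then c else b) :: mergeP P L' g' s'
  | _, _, _ => []
  end.

Lemma Eb_merge (p : R) (P : lab -> bool) (L : list lab) (F : list bool -> R) :
  Eb p (length L) F = Eb p (length L) (fun g => Eb p (length L) (fun s => F (mergeP P L g s))).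
Proof.
  revert F; induction L as [|l L IH]; intros F; simpl; [reflexivity|].
  rewrite (IH (fun g => F (true :: g))), (IH (fun g => F (false :: g))).
  destruct (P l); rewrite !Eb_plus, !Eb_scal; ring.
Qed.

Lemma Eb_clear (p : R) (P : lab -> bool) (L : list lab) (h : list bool -> R) :
  Eb p (length L) (fun g => indb (allfalse P L g) * h g) =
  (1 - p) ^ length (filter P L) * Eb p (length L) (fun g => h (clearP P L g)).
Proof.
  revert h; induction L as [|l L IH]; intros h; simpl; [unfold indb; simpl; ring|].
  destruct (P l); simpl.
  - rewrite (Eb_ext p _ _ (fun _ => 0)) by (intros; unfold indb; simpl; ring).
    rewrite Eb_const, (IH (fun g => h (false :: g))); ring.
  - rewrite (IH (fun g => h (true :: g))), (IH (fun g => h (false :: g))); ring.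
Qed.

Lemma Eb_allfalse (p : R) (P : lab -> bool) (L : list lab) :
  Eb p (length L) (fun g => indb (allfalse P L g)) = (1 - p) ^ length (filter P L).
Proof.
  rewrite (Eb_ext p _ _ (fun g => indb (allfalse P L g) * 1)) by (intros; ring).
  rewrite Eb_clear, Eb_const; ring.
Qed.

Lemma clear_merge (P : lab -> bool) (L : list lab) (g s : list bool) :
  length g = length L -> length s = length L ->
  clearP P L (mergeP P L g s) = clearP P L g.
Proof.
  revert g s; induction L as [|l L IH]; intros [|b g] [|c s]; simpl; intros Hg Hs;
    try lia; auto.
  rewrite IH by lia; destruct (P l); reflexivity.
Qed.

Lemma allfalse_clear (Q P : lab -> bool) (L : list lab) (g : list bool) :
  allfalse Q L g = true -> allfalse Q L (clearP P L g) = true.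
Proof.
  revert g; induction L as [|l L IH]; intros [|b g]; simpl; auto.
  intros Hg; apply andb_true_iff in Hg as [Hb Hg].
  rewrite IH by auto; destruct (P l), (Q l), b; simpl in *; auto.
Qed.

Lemma allfalse_merge (Q P : lab -> bool) (L : list lab) (g s : list bool) :
  allfalse Q L (clearP P L g) = true -> allfalse (fun l => P l && Q l) L s = true ->
  allfalse Q L (mergeP P L g s) = true.
Proof.
  revert g s; induction L as [|l L IH]; intros [|b g] [|c s]; simpl; auto.
  intros Hg Hs; apply andb_true_iff in Hg as [Hb Hg]; apply andb_true_iff in Hs as [Hc Hs].
  rewrite IH by auto; destruct (P l), (Q l), b, c; simpl in *; auto.
Qed.

Lemma allfalse_witness (Q : lab -> bool) (L : list lab) (g : list bool) :
  allfalse Q L g = false ->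
  exists l, Q l = true /\ forall P, allfalse Q L (clearP P L g) = true -> P l = true.
Proof.
  revert g; induction L as [|l L IH]; intros [|b g]; simpl; try discriminate.
  intros Hg; destruct (Q l && b) eqn:Elb.
  - apply andb_true_iff in Elb as [Hl ->]; exists l; split; auto.
    intros P; rewrite Hl; destruct (P l); simpl; auto.
  - destruct (IH g Hg) as [l' [Hl' Hforce]]; exists l'; split; auto.
    intros P HP; apply andb_true_iff in HP as [_ HP]; auto.
Qed.

Lemma edges_S (n : nat) : edges (S n) = edges n ++ map (fun i => (i, n)) (seq 0 n).
Proof. unfold edges; rewrite seq_S, flat_map_app; simpl; now rewrite app_nil_r. Qed.

Lemma edges_lt (n : nat) (e : lab) : In e (edges n) -> (fst e < snd e < n)%nat.
Proof.
  unfold edges; intros He; apply in_flat_map in He as [j [Hj He]].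
  apply in_map_iff in He as [i [<- Hi]]; apply in_seq in Hj, Hi; simpl; lia.
Qed.

Definition inc (v : nat) (e : lab) : bool := (fst e =? v) || (snd e =? v).

Lemma inc_top (n : nat) (e : lab) : In e (edges n) -> inc n e = false.
Proof.
  intros He; apply edges_lt in He; unfold inc.
  apply orb_false_iff; split; apply Nat.eqb_neq; lia.
Qed.

Lemma count_edges_S (Q : lab -> bool) (n : nat) :
  length (filter Q (edges (S n))) =
  (length (filter Q (edges n)) + length (filter (fun i => Q (i, n)) (seq 0 n)))%nat.
Proof. now rewrite edges_S, filter_app, length_app, filter_map_swap, length_map. Qed.

Lemma count_seq_eq (v n : nat) : (v < n)%nat ->
  length (filter (fun i => i =? v) (seq 0 n)) = 1%nat.
Proof.
  intros Hv; replace n with (v + 1 + (n - v - 1))%nat by lia.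
  rewrite !seq_app, !filter_app, !length_app; simpl.
  rewrite Nat.eqb_refl; simpl.
  rewrite (filter_ext_in _ (fun _ => false) (seq 0 v)),
          (filter_ext_in _ (fun _ => false) (seq (v + 1) _)), !List.filter_false; simpl; auto;
    intros i Hi; apply in_seq in Hi; apply Nat.eqb_neq; lia.
Qed.

Lemma count_inc (n v : nat) : (v < n)%nat -> length (filter (inc v) (edges n)) = (n - 1)%nat.
Proof.
  induction n as [|n IH]; intros Hv; [lia|]; rewrite count_edges_S.
  destruct (Nat.eq_dec v n) as [->|Hne].
  - rewrite (filter_ext_in _ (fun _ => false) (edges n)) by (intros; now apply inc_top).
    rewrite (filter_ext_in _ (fun _ => true) (seq 0 n))
      by (intros; unfold inc; simpl; now rewrite Nat.eqb_refl, orb_true_r).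
    rewrite List.filter_false, List.filter_true, length_seq; simpl; lia.
  - rewrite IH by lia.
    rewrite (filter_ext_in _ (fun i => i =? v))
      by (intros; unfold inc; simpl; rewrite (proj2 (Nat.eqb_neq n v)) by lia; apply orb_false_r).
    rewrite count_seq_eq by lia; lia.
Qed.

Lemma count_inc2 (n v w : nat) : (v < n)%nat -> (w < n)%nat -> v <> w ->
  length (filter (fun e => inc v e && inc w e) (edges n)) = 1%nat.
Proof.
  induction n as [|n IH]; intros Hv Hw Hvw; [lia|]; rewrite count_edges_S.
  assert (Htop : forall u, (u < n)%nat -> filter (fun i => inc u (i, n)) (seq 0 n)
                                         = filter (fun i => i =? u) (seq 0 n)).
  { intros u Hu; apply filter_ext_in; intros i _; unfold inc; simpl.
    rewrite (proj2 (Nat.eqb_neq n u)) by lia; apply orb_false_r. }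
  destruct (Nat.eq_dec v n) as [->|Hvn]; [|destruct (Nat.eq_dec w n) as [->|Hwn]].
  - rewrite (filter_ext_in _ (fun _ => false) (edges n)) by (intros; now rewrite inc_top).
    rewrite (filter_ext_in _ (fun i => inc w (i, n)) (seq 0 n))
      by (intros; unfold inc; simpl; now rewrite Nat.eqb_refl, orb_true_r).
    rewrite List.filter_false, Htop, count_seq_eq by lia; reflexivity.
  - rewrite (filter_ext_in _ (fun _ => false) (edges n))
      by (intros; rewrite (inc_top n) by auto; apply andb_false_r).
    rewrite (filter_ext_in _ (fun i => inc v (i, n)) (seq 0 n))
      by (intros; unfold inc; simpl; now rewrite Nat.eqb_refl, orb_true_r, andb_true_r).
    rewrite List.filter_false, Htop, count_seq_eq by lia; reflexivity.
  - rewrite IH by lia.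
    rewrite (filter_ext_in _ (fun _ => false) (seq 0 n)), List.filter_false; [simpl; lia|].
    intros i _; unfold inc; simpl.
    rewrite (proj2 (Nat.eqb_neq n v)), (proj2 (Nat.eqb_neq n w)) by lia.
    destruct (i =? v) eqn:Eiv, (i =? w) eqn:Eiw; auto.
    apply Nat.eqb_eq in Eiv, Eiw; lia.
Qed.

Lemma exp_mono (x y : R) : x <= y -> exp x <= exp y.
Proof. intros [Hlt | ->]; [left; now apply exp_increasing | right; reflexivity]. Qed.

Lemma exp_INR_mult (N : nat) (x : R) : exp (INR N * x) = exp x ^ N.
Proof. rewrite <- Rpower_pow by apply exp_pos; unfold Rpower; now rewrite ln_exp. Qed.

Lemma exp_convex (p u : R) : 0 <= p <= 1 -> exp (p * u) <= p * exp u + (1 - p).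
Proof.
  intros Hp; pose proof (Eb_jensen p 1 (fun g => u * indb (hd false g)) Hp) as Hj.
  simpl in Hj; unfold indb in Hj; simpl in Hj.
  rewrite Rmult_0_r, exp_0, Rmult_1_r in Hj.
  replace (p * u + (1 - p) * 0) with (p * u) in Hj by ring; lra.
Qed.

Lemma nondecreasing_of_deriv (f f' : R -> R) (a b : R) : a <= b ->
  (forall x, a <= x <= b -> is_derive f x (f' x)) ->
  (forall x, a <= x <= b -> 0 <= f' x) -> f a <= f b.
Proof.
  intros Hab Hder Hpos; destruct (Req_dec a b) as [<-|Hne]; [lra|].
  destruct (MVT_cor2 f f' a b ltac:(lra)) as [c [Hmvt Hc]].
  { intros c Hc; apply is_derive_Reals, Hder; lra. }
  assert (0 <= f' c) by (apply Hpos; lra); nra.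
Qed.

(** Trapezoid bound, from the convexity of [exp] on [[a, b]]. *)
Lemma exp_trapezoid (a b : R) : a <= b -> exp b - exp a <= (b - a) / 2 * (exp b + exp a).
Proof.
  intros Hab.
  set (f := fun x => (x - a) / 2 * (exp x + exp a) - exp x + exp a).
  enough (f a <= f b) by (unfold f in *; lra).
  apply (nondecreasing_of_deriv f (fun x => (exp a - exp x + (x - a) * exp x) / 2)); auto.
  - intros x _; unfold f; auto_derive; auto; field.
  - intros x _.
    assert (Hax : exp x * exp (a - x) = exp a) by (rewrite <- exp_plus; f_equal; ring).
    pose proof (exp_ineq1_le (a - x)); pose proof (exp_pos x); nra.
Qed.

(** The key inequality behind part (i): if [X <= K] and the mean gap [E(K - X)]
    is at most [c], then [exp(uK)] exceeds the mgf of [X] by a factor at most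
    [1 + u c (e^(uc) + 1) / 2] (trapezoid bound, Chebyshev and Jensen). *)
Lemma exp_gap_bound (p : R) (k : nat) (X : list bool -> R) (K c u : R) :
  0 <= p <= 1 -> 0 <= u ->
  (forall s, length s = k -> X s <= K) -> Eb p k (fun s => K - X s) <= c ->
  exp (u * K) <= (1 + u / 2 * c * (exp (u * c) + 1)) * Eb p k (fun s => exp (u * X s)).
Proof.
  intros Hp Hu HXK Hgap.
  set (m := Eb p k (fun s => exp (u * X s))).
  set (E1 := Eb p k (fun s => K - X s)) in *.
  assert (Hm : 0 < m) by (apply Eb_pos; auto; intros; apply exp_pos).
  assert (HE1 : 0 <= E1).
  { unfold E1; rewrite <- (Eb_const p k 0); apply Eb_le; auto; intros s Hs.
    specialize (HXK s Hs); lra. }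
  assert (Htrap : Eb p k (fun s => exp (u * K) - exp (u * X s))
                  <= u / 2 * (E1 * exp (u * K) + Eb p k (fun s => (K - X s) * exp (u * X s)))).
  { apply Rle_trans with (Eb p k (fun s => u / 2 * exp (u * K) * (K - X s)
                                           + u / 2 * ((K - X s) * exp (u * X s)))).
    - apply Eb_le; auto; intros s Hs.
      pose proof (exp_trapezoid (u * X s) (u * K) ltac:(specialize (HXK s Hs); nra)); nra.
    - rewrite Eb_plus, !Eb_scal; fold E1; lra. }
  assert (Hcheb : Eb p k (fun s => (K - X s) * exp (u * X s)) <= E1 * m).
  { apply Eb_chebyshev; auto; intros s s'.
    destruct (Rle_dec (X s) (X s')) as [Hle | Hgt].
    - assert (exp (u * X s) <= exp (u * X s')) by (apply exp_mono; nra); nra.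
    - assert (exp (u * X s') <= exp (u * X s)) by (apply exp_mono; nra); nra. }
  assert (Hjensen : exp (u * K) <= exp (u * c) * m).
  { replace (u * K) with (u * E1 + Eb p k (fun s => u * X s))
      by (unfold E1; rewrite Eb_minus, Eb_const, Eb_scal; ring).
    rewrite exp_plus; apply Rmult_le_compat; try (left; apply exp_pos).
    - apply exp_mono; nra.
    - apply Eb_jensen; auto. }
  rewrite Eb_minus, Eb_const in Htrap; fold m in Htrap.
  assert (u / 2 * (E1 * exp (u * K) + E1 * m) <= u / 2 * (c * (exp (u * c) * m) + c * m)).
  { apply Rmult_le_compat_l; [lra|].
    pose proof (exp_pos (u * K)); apply Rplus_le_compat; apply Rmult_le_compat; nra. }
  nra.
Qed.

Definition iso (n v : nat) (g : list bool) : bool := allfalse (inc v) (edges n) g.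

Definition Yiso (n : nat) (g : list bool) : R := sumL (seq 0 n) (fun w => indb (iso n w g)).

Definition clear_at (n v : nat) (g : list bool) : list bool := clearP (inc v) (edges n) g.

Lemma isolated_iso (n : nat) (g : list bool) (v : nat) : isolated n g v = iso n v g.
Proof.
  unfold isolated, present_edges, iso; generalize (edges n) as L; intros L.
  revert g; induction L as [|[a b] L IH]; intros [|[|] g]; simpl; auto;
    unfold inc; simpl; rewrite ?andb_false_r, IH; [|reflexivity].
  destruct (a =? v), (b =? v); reflexivity.
Qed.

Lemma Ycount_Yiso (n : nat) (g : list bool) : Ycount n g = Yiso n g.
Proof.
  unfold Ycount, Yiso; rewrite INR_length_filter.
  apply sumL_ext; intros v _; now rewrite isolated_iso.
Qed.

Lemma size_bias (p : R) (n : nat) (h : list bool -> R) :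
  Eb p (length (edges n)) (fun g => Yiso n g * h g) =
  (1 - p) ^ (n - 1) * sumL (seq 0 n) (fun v => Eb p (length (edges n)) (fun g => h (clear_at n v g))).
Proof.
  rewrite (Eb_ext p _ _ (fun g => sumL (seq 0 n) (fun v => indb (iso n v g) * h g)))
    by (intros g _; unfold Yiso; rewrite Rmult_comm, <- sumL_scal; apply sumL_ext; intros; ring).
  rewrite Eb_sumL, <- sumL_scal; apply sumL_ext; intros v Hv; apply in_seq in Hv.
  unfold iso; rewrite Eb_clear, count_inc by lia; reflexivity.
Qed.

Lemma sumL_seq_if (n v : nat) (A B : R) : (v < n)%nat ->
  sumL (seq 0 n) (fun w => if w =? v then A else B) = A + INR (n - 1) * B.
Proof.
  intros Hv.
  rewrite (sumL_ext _ _ (fun w => B + (A - B) * indb (w =? v)))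
    by (intros w _; unfold indb; destruct (w =? v); ring).
  rewrite sumL_plus, sumL_const, sumL_scal, <- INR_length_filter, count_seq_eq, length_seq,
    minus_INR by lia; simpl; ring.
Qed.

Lemma sum_indicator_le1 (n o : nat) : sumL (seq 0 n) (fun v => indb (v =? o)) <= 1.
Proof.
  rewrite <- INR_length_filter; destruct (Nat.lt_ge_cases o n) as [Ho | Ho].
  - rewrite count_seq_eq by lia; simpl; lra.
  - rewrite (filter_ext_in _ (fun _ => false)), List.filter_false; [simpl; lra|].
    intros v Hv; apply in_seq in Hv; apply Nat.eqb_neq; lia.
Qed.

(** Resample the edges at [v]: the graph [g]
    with [v] isolated dominates the resampled graph, and the isolated-count gap
    is at most [1 + #(edges vw present)], of mean [c = 1 + (n-1)p]. *)
Section UpperCoupling.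
Variables (n : nat) (p : R) (v : nat).
Hypotheses (Hn : (2 <= n)%nat) (Hp : 0 <= p <= 1) (Hv : (v < n)%nat).
Local Notation L := (edges n).
Local Notation merge g s := (mergeP (inc v) (edges n) g s).

Lemma Y_merge_le (g s : list bool) : length g = length L -> length s = length L ->
  Yiso n (merge g s) <= Yiso n (clear_at n v g).
Proof.
  intros Hg Hs; apply sumL_le; intros w _; unfold iso, clear_at.
  destruct (allfalse (inc w) L (mergeP (inc v) L g s)) eqn:E.
  - apply (allfalse_clear _ (inc v)) in E; rewrite clear_merge in E by auto.
    rewrite E; unfold indb; lra.
  - unfold indb at 1; destruct (allfalse _ _ (clearP _ _ _)); unfold indb; lra.
Qed.

Lemma Y_merge_gap (g s : list bool) :
  Yiso n (clear_at n v g) - Yiso n (merge g s) <=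
  sumL (seq 0 n) (fun w => if w =? v then 1
                           else 1 - indb (allfalse (fun l => inc v l && inc w l) L s)).
Proof.
  unfold Yiso; rewrite <- sumL_minus; apply sumL_le; intros w _; unfold iso, clear_at.
  destruct (w =? v).
  { destruct (allfalse _ _ (clearP _ _ _)), (allfalse _ _ (mergeP _ _ _ _)); unfold indb; lra. }
  destruct (allfalse (inc w) L (clearP (inc v) L g)) eqn:E1;
  destruct (allfalse (fun l => inc v l && inc w l) L s) eqn:E2;
  try (destruct (allfalse _ _ (mergeP _ _ _ _)); unfold indb; simpl; lra).
  rewrite (allfalse_merge _ _ _ _ _ E1 E2); unfold indb; simpl; lra.
Qed.

Lemma Eb_merge_gap :
  Eb p (length L) (fun s => sumL (seq 0 n) (fun w => if w =? v then 1
      else 1 - indb (allfalse (fun l => inc v l && inc w l) L s))) = 1 + INR (n - 1) * p.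
Proof.
  rewrite (Eb_sumL p _ _ (fun w s => if w =? v then 1
      else 1 - indb (allfalse (fun l => inc v l && inc w l) L s))).
  rewrite <- (sumL_seq_if n v 1 p Hv); apply sumL_ext; intros w Hw; apply in_seq in Hw.
  destruct (w =? v) eqn:Ewv; [apply Eb_const|]; apply Nat.eqb_neq in Ewv.
  rewrite Eb_minus, Eb_const, Eb_allfalse; rewrite count_inc2 by lia; simpl; ring.
Qed.

Lemma gamma_ge (u : R) : 0 <= u ->
  (1 + INR (n - 1) * p) * (exp (u * (1 + INR (n - 1) * p)) + 1) <= gamma n p u.
Proof.
  intros Hu; unfold gamma.
  destruct n as [|[|j]]; try lia.
  replace (S (S j) - 2)%nat with j by lia; replace (S (S j) - 1)%nat with (S j) by lia.
  assert (Hexp : exp (u * (1 + INR (S j) * p)) <= exp u * (p * exp u + 1 - p) ^ S j).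
  { replace (u * (1 + INR (S j) * p)) with (u + INR (S j) * (p * u)) by ring.
    rewrite exp_plus, exp_INR_mult; apply Rmult_le_compat_l; [left; apply exp_pos|].
    apply pow_incr; split; [left; apply exp_pos|]; pose proof (exp_convex p u Hp); lra. }
  rewrite (S_INR (S j)); simpl pow in *.
  set (N := INR (S j)) in *; set (a := exp u) in *; set (T := (p * a + 1 - p) ^ j) in *.
  assert (HN : 0 <= N) by apply pos_INR.
  assert (Ha : 1 <= a) by (unfold a; pose proof (exp_ineq1_le u); lra).
  assert (HT : 0 <= T) by (unfold T; apply pow_le; nra).
  assert (0 <= a * T * (N * p * (1 - p) * (a - 1))) by (apply Rmult_le_pos; [nra|]; repeat apply Rmult_le_pos; nra).
  assert (0 <= 1 + N * p) by nra.
  nra.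
Qed.

Lemma clear_mgf_upper (u : R) : 0 <= u ->
  Eb p (length L) (fun g => exp (u * Yiso n (clear_at n v g)))
  <= (1 + u / 2 * gamma n p u) * Eb p (length L) (fun g => exp (u * Yiso n g)).
Proof.
  intros Hu; set (c := 1 + INR (n - 1) * p).
  rewrite (Eb_merge p (inc v) L (fun g => exp (u * Yiso n g))), <- Eb_scal.
  apply Eb_le; auto; intros g Hg.
  apply Rle_trans with ((1 + u / 2 * c * (exp (u * c) + 1))
                        * Eb p (length L) (fun s => exp (u * Yiso n (merge g s)))).
  - apply exp_gap_bound; auto.
    + intros s Hs; apply Y_merge_le; auto.
    + unfold c; rewrite <- Eb_merge_gap; apply Eb_le; auto; intros s _; apply Y_merge_gap.
  - apply Rmult_le_compat_r; [left; apply Eb_pos; auto; intros; apply exp_pos|].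
    pose proof (gamma_ge u Hu) as Hgamma; fold c in Hgamma.
    assert (u / 2 * (c * (exp (u * c) + 1)) <= u / 2 * gamma n p u) by (apply Rmult_le_compat_l; lra).
    lra.
Qed.

End UpperCoupling.

Lemma Y_mgf_upper (n : nat) (p u : R) : (2 <= n)%nat -> 0 <= p <= 1 -> 0 <= u ->
  Eb p (length (edges n)) (fun g => Yiso n g * exp (u * Yiso n g))
  <= mu n p * (1 + u / 2 * gamma n p u) * Eb p (length (edges n)) (fun g => exp (u * Yiso n g)).
Proof.
  intros Hn Hp Hu; rewrite size_bias.
  set (m := Eb p (length (edges n)) (fun g => exp (u * Yiso n g))).
  apply Rle_trans with ((1 - p) ^ (n - 1) * sumL (seq 0 n) (fun _ => (1 + u / 2 * gamma n p u) * m)).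
  - apply Rmult_le_compat_l; [apply pow_le; lra|].
    apply sumL_le; intros v Hv; apply in_seq in Hv; apply clear_mgf_upper; auto; lia.
  - rewrite sumL_const, length_seq; unfold mu; right; ring.
Qed.

Definition newly_iso (n w v : nat) (g : list bool) : bool :=
  negb (v =? w) && iso n w (clear_at n v g) && negb (iso n w g).

Lemma clear_gain (n v : nat) (g : list bool) :
  Yiso n (clear_at n v g) - Yiso n g
  <= sumL (seq 0 n) (fun w => indb (v =? w) + indb (newly_iso n w v g)).
Proof.
  unfold Yiso; rewrite <- sumL_minus; apply sumL_le; intros w _; unfold newly_iso.
  destruct (v =? w), (iso n w (clear_at n v g)), (iso n w g); unfold indb; simpl; lra.
Qed.

(** A non-isolated vertex [w] can be newly isolated by deleting the edges of
    at most one vertex: the other endpoint of one of its edges. *)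
Lemma newly_iso_unique (n w : nat) (g : list bool) : iso n w g = false ->
  exists o, forall v, newly_iso n w v g = true -> v = o.
Proof.
  intros Hw; destruct (allfalse_witness _ _ _ Hw) as [[x y] [Hinc Hforce]].
  exists (if x =? w then y else x); intros v Hnew; unfold newly_iso in Hnew.
  apply andb_true_iff in Hnew as [Hnew _]; apply andb_true_iff in Hnew as [Hvw Hclear].
  specialize (Hforce (inc v) Hclear); unfold inc in Hinc, Hforce; simpl in Hinc, Hforce.
  apply negb_true_iff, Nat.eqb_neq in Hvw.
  destruct (x =? w) eqn:Exw, (x =? v) eqn:Exv, (y =? w) eqn:Eyw, (y =? v) eqn:Eyv;
    simpl in *; try discriminate;
    repeat match goal with
           | H : (_ =? _) = true |- _ => apply Nat.eqb_eq in H
           | H : (_ =? _) = false |- _ => apply Nat.eqb_neq in H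
           end; lia.
Qed.

Lemma newly_iso_sum (n w : nat) (g : list bool) :
  sumL (seq 0 n) (fun v => indb (newly_iso n w v g)) <= 1.
Proof.
  destruct (iso n w g) eqn:Hw.
  - rewrite (sumL_ext _ _ (fun _ => 0)), sumL_const; [lra|].
    intros v _; unfold newly_iso; now rewrite Hw, andb_false_r.
  - destruct (newly_iso_unique n w g Hw) as [o Ho].
    apply Rle_trans with (sumL (seq 0 n) (fun v => indb (v =? o))); [|apply sum_indicator_le1].
    apply sumL_le; intros v _; destruct (newly_iso n w v g) eqn:Hnew.
    + rewrite (Ho v Hnew), Nat.eqb_refl; lra.
    + destruct (v =? o); unfold indb; lra.
Qed.

Lemma clear_gain_sum (n : nat) (g : list bool) :
  sumL (seq 0 n) (fun v => Yiso n (clear_at n v g) - Yiso n g) <= 2 * INR n.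
Proof.
  apply Rle_trans with (sumL (seq 0 n) (fun v =>
      sumL (seq 0 n) (fun w => indb (v =? w) + indb (newly_iso n w v g)))).
  { apply sumL_le; intros v _; apply clear_gain. }
  rewrite sumL_swap.
  replace (2 * INR n) with (sumL (seq 0 n) (fun _ => 2)) by (rewrite sumL_const, length_seq; ring).
  apply sumL_le; intros w Hw; apply in_seq in Hw.
  rewrite sumL_plus, <- INR_length_filter.
  rewrite count_seq_eq by lia; pose proof (newly_iso_sum n w g); simpl; lra.
Qed.

(** Pointwise consequence of [e^x >= 1 + x] and [clear_gain_sum], for [u <= 0]. *)
Lemma clear_exp_sum_lower (n : nat) (u : R) (g : list bool) : u <= 0 ->
  INR n * (1 + 2 * u) * exp (u * Yiso n g) <= sumL (seq 0 n) (fun v => exp (u * Yiso n (clear_at n v g))).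
Proof.
  intros Hu.
  apply Rle_trans with (sumL (seq 0 n) (fun v =>
      exp (u * Yiso n g) * 1 + (exp (u * Yiso n g) * u) * (Yiso n (clear_at n v g) - Yiso n g))).
  - rewrite sumL_plus, sumL_const, !sumL_scal, length_seq.
    pose proof (clear_gain_sum n g); pose proof (exp_pos (u * Yiso n g)).
    assert (u * sumL (seq 0 n) (fun v => Yiso n (clear_at n v g) - Yiso n g) >= u * (2 * INR n)) by nra.
    nra.
  - apply sumL_le; intros v _.
    replace (u * Yiso n (clear_at n v g)) with (u * Yiso n g + u * (Yiso n (clear_at n v g) - Yiso n g)) by ring.
    rewrite exp_plus; pose proof (exp_ineq1_le (u * (Yiso n (clear_at n v g) - Yiso n g))).
    pose proof (exp_pos (u * Yiso n g)); nra.
Qed.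

Lemma Y_mgf_lower (n : nat) (p u : R) : 0 <= p <= 1 -> u <= 0 ->
  mu n p * (1 + 2 * u) * Eb p (length (edges n)) (fun g => exp (u * Yiso n g))
  <= Eb p (length (edges n)) (fun g => Yiso n g * exp (u * Yiso n g)).
Proof.
  intros Hp Hu; rewrite size_bias, <- Eb_sumL.
  replace (mu n p * (1 + 2 * u) * Eb p _ _) with
    ((1 - p) ^ (n - 1) * Eb p (length (edges n)) (fun g => INR n * (1 + 2 * u) * exp (u * Yiso n g)))
    by (rewrite Eb_scal; unfold mu; ring).
  apply Rmult_le_compat_l; [apply pow_le; lra|].
  apply Eb_le; auto; intros g _; apply clear_exp_sum_lower; auto.
Qed.

Lemma mu_pos (n : nat) (p : R) : (2 <= n)%nat -> 0 < p < 1 -> 0 < mu n p.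
Proof. intros Hn Hp; apply Rmult_lt_0_compat; [apply lt_0_INR; lia | apply pow_lt; lra]. Qed.

Lemma sigma2_pos (n : nat) (p : R) : (2 <= n)%nat -> 0 < p < 1 -> 0 < sigma2 n p.
Proof.
  intros Hn Hp; unfold sigma2.
  assert (0 < INR n) by (apply lt_0_INR; lia).
  assert (0 < (1 - p) ^ (n - 1)) by (apply pow_lt; lra).
  assert (0 < (1 - p) ^ (n - 2)) by (apply pow_lt; lra).
  assert (Hle1 : (1 - p) ^ (n - 2) <= 1 ^ (n - 2)) by (apply pow_incr; lra); rewrite pow1 in Hle1.
  assert (0 < INR n * p * (1 - p) ^ (n - 2)) by (repeat apply Rmult_lt_0_compat; lra).
  apply Rmult_lt_0_compat; [nra | lra].
Qed.

Lemma sigma_pos (n : nat) (p : R) : (2 <= n)%nat -> 0 < p < 1 -> 0 < sigma n p.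
Proof. intros; apply sqrt_lt_R0, sigma2_pos; auto. Qed.

Lemma sigma_sq (n : nat) (p : R) : (2 <= n)%nat -> 0 < p < 1 -> sigma n p * sigma n p = sigma2 n p.
Proof. intros; apply sqrt_sqrt; left; apply sigma2_pos; auto. Qed.

Definition Mder (n : nat) (p theta : R) : R :=
  Expect n p (fun g => Zstd n p g * exp (theta * Zstd n p g)).

Lemma M_pos (n : nat) (p theta : R) : 0 <= p <= 1 -> 0 < M n p theta.
Proof. intros Hp; unfold M; rewrite Expect_Eb; apply Eb_pos; auto; intros; apply exp_pos. Qed.

Lemma M_0 (n : nat) (p : R) : M n p 0 = 1.
Proof.
  unfold M; rewrite Expect_Eb, (Eb_ext _ _ _ (fun _ => 1)) by (intros; now rewrite Rmult_0_l, exp_0).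
  apply Eb_const.
Qed.

Lemma Eb_exp_derive (p : R) (k : nat) (z : list bool -> R) (theta : R) :
  is_derive (fun t => Eb p k (fun g => exp (t * z g))) theta (Eb p k (fun g => z g * exp (theta * z g))).
Proof.
  revert z; induction k as [|k IH]; intros z; simpl.
  - auto_derive; auto; ring.
  - apply (is_derive_plus (fun t => p * Eb p k (fun g => exp (t * z (true :: g))))
                          (fun t => (1 - p) * Eb p k (fun g => exp (t * z (false :: g)))));
      apply is_derive_scal; apply IH.
Qed.

Lemma M_derive (n : nat) (p theta : R) : is_derive (M n p) theta (Mder n p theta).
Proof.
  unfold M, Mder.
  apply (is_derive_ext (fun t => Eb p (length (edges n)) (fun g => exp (t * Zstd n p g)))).
  - intros; now rewrite Expect_Eb.
  - rewrite Expect_Eb; apply Eb_exp_derive.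
Qed.

Lemma lnM_derive (n : nat) (p theta : R) : 0 <= p <= 1 ->
  is_derive (fun t => ln (M n p t)) theta (Mder n p theta / M n p theta).
Proof.
  intros Hp; pose proof (M_pos n p theta Hp) as HM.
  apply (is_derive_comp ln (M n p) theta); [|apply M_derive].
  apply is_derive_Reals, derivable_pt_lim_ln; lra.
Qed.

(** The logarithmic derivative of [M] is the centred, scaled mean of [Y]
    under the exponentially tilted law [e^(uY) dP / E e^(uY)], [u = theta/sigma]. *)
Lemma Mder_ratio (n : nat) (p theta : R) : (2 <= n)%nat -> 0 < p < 1 ->
  let u := theta / sigma n p in
  Mder n p theta / M n p theta =
  (Eb p (length (edges n)) (fun g => Yiso n g * exp (u * Yiso n g))
   / Eb p (length (edges n)) (fun g => exp (u * Yiso n g)) - mu n p) / sigma n p.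
Proof.
  intros Hn Hp u.
  pose proof (sigma_pos n p Hn Hp) as Hs.
  set (A := exp (- (theta * mu n p / sigma n p))).
  assert (HA : 0 < A) by apply exp_pos.
  assert (Hexp : forall g, exp (theta * Zstd n p g) = A * exp (u * Yiso n g)).
  { intros g; unfold A, u, Zstd; rewrite Ycount_Yiso, <- exp_plus; f_equal; field; lra. }
  assert (Hm : 0 < Eb p (length (edges n)) (fun g => exp (u * Yiso n g)))
    by (apply Eb_pos; [lra | intros; apply exp_pos]).
  unfold Mder, M; rewrite !Expect_Eb.
  rewrite (Eb_ext _ _ (fun g => exp (theta * Zstd n p g)) (fun g => A * exp (u * Yiso n g)))
    by (intros; apply Hexp).
  rewrite (Eb_ext _ _ (fun g => Zstd n p g * exp (theta * Zstd n p g)) (fun g => (A / sigma n p) * (Yiso n g * exp (u * Yiso n g))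
                                + (- (A / sigma n p) * mu n p) * exp (u * Yiso n g)))
    by (intros g _; rewrite Hexp; unfold Zstd; rewrite Ycount_Yiso; field; lra).
  rewrite Eb_plus, !Eb_scal; field; lra.
Qed.

Lemma logM_slope_upper (n : nat) (p theta : R) : (2 <= n)%nat -> 0 < p < 1 -> 0 <= theta ->
  Mder n p theta / M n p theta <= mu n p / (2 * sigma2 n p) * H_integrand n p theta.
Proof.
  intros Hn Hp Hth; rewrite Mder_ratio by auto; cbv zeta.
  pose proof (sigma_pos n p Hn Hp) as Hs.
  set (u := theta / sigma n p).
  assert (Hu : 0 <= u) by (apply Rdiv_le_0_compat; lra).
  set (m := Eb p _ (fun g => exp (u * Yiso n g))).
  assert (Hm : 0 < m) by (apply Eb_pos; [lra | intros; apply exp_pos]).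
  pose proof (Y_mgf_upper n p u Hn ltac:(lra) Hu) as Hup; fold m in Hup.
  unfold H_integrand; rewrite <- (sigma_sq n p Hn Hp); fold u.
  apply Rmult_le_reg_r with (sigma n p * m); [nra|].
  replace ((_ / m - mu n p) / sigma n p * (sigma n p * m)) with
    (Eb p (length (edges n)) (fun g => Yiso n g * exp (u * Yiso n g)) - mu n p * m) by (field; lra).
  replace (mu n p / (2 * (sigma n p * sigma n p)) * (theta * gamma n p u) * (sigma n p * m))
    with (mu n p * (u / 2 * gamma n p u) * m) by (unfold u; field; lra).
  lra.
Qed.

Lemma logM_slope_lower (n : nat) (p theta : R) : (2 <= n)%nat -> 0 < p < 1 -> theta <= 0 ->
  2 * mu n p * theta / sigma2 n p <= Mder n p theta / M n p theta.
Proof.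
  intros Hn Hp Hth; rewrite Mder_ratio by auto; cbv zeta.
  pose proof (sigma_pos n p Hn Hp) as Hs.
  set (u := theta / sigma n p).
  assert (Hu : u <= 0) by (unfold u, Rdiv; apply Rmult_le_0_r; [lra | left; apply Rinv_0_lt_compat; lra]).
  set (m := Eb p _ (fun g => exp (u * Yiso n g))).
  assert (Hm : 0 < m) by (apply Eb_pos; [lra | intros; apply exp_pos]).
  pose proof (Y_mgf_lower n p u ltac:(lra) Hu) as Hlow; fold m in Hlow.
  rewrite <- (sigma_sq n p Hn Hp).
  apply Rmult_le_reg_r with (sigma n p * m); [nra|].
  replace ((_ / m - mu n p) / sigma n p * (sigma n p * m)) with
    (Eb p (length (edges n)) (fun g => Yiso n g * exp (u * Yiso n g)) - mu n p * m) by (field; lra).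
  replace (2 * mu n p * theta / (sigma n p * sigma n p) * (sigma n p * m))
    with (mu n p * (2 * u) * m) by (unfold u; field; lra).
  lra.
Qed.

Lemma H_integrand_continuous (n : nat) (p x : R) : continuous (H_integrand n p) x.
Proof.
  apply (@ex_derive_continuous R_AbsRing R_NormedModule).
  unfold H_integrand, gamma; auto_derive; auto.
Qed.

Lemma RInt_H_derive (n : nat) (p x : R) :
  is_derive (RInt (H_integrand n p) 0) x (H_integrand n p x).
Proof.
  apply (is_derive_RInt _ _ 0); [|apply H_integrand_continuous].
  apply filter_forall; intros b; apply (@RInt_correct R_CompleteNormedModule).
  apply (@ex_RInt_continuous R_CompleteNormedModule); intros; apply H_integrand_continuous.
Qed.

Lemma logM_upper (n : nat) (p theta : R) : (2 <= n)%nat -> 0 < p < 1 -> 0 <= theta ->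
  ln (M n p theta) <= mu n p / (2 * sigma2 n p) * RInt (H_integrand n p) 0 theta.
Proof.
  intros Hn Hp Hth; set (C := mu n p / (2 * sigma2 n p)).
  enough (C * RInt (H_integrand n p) 0 0 - ln (M n p 0)
          <= C * RInt (H_integrand n p) 0 theta - ln (M n p theta))
    by (rewrite RInt_point, M_0, ln_1 in *; unfold zero in *; simpl in *; lra).
  apply (nondecreasing_of_deriv (fun x => C * RInt (H_integrand n p) 0 x - ln (M n p x))
           (fun x => C * H_integrand n p x - Mder n p x / M n p x)); auto.
  - intros x _; apply (is_derive_minus (fun x => C * RInt (H_integrand n p) 0 x) (fun x => ln (M n p x))).
    + apply is_derive_scal, RInt_H_derive.
    + apply lnM_derive; lra.
  - intros x Hx; pose proof (logM_slope_upper n p x Hn Hp ltac:(lra)) as Hslope.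
    fold C in Hslope; lra.
Qed.

(** Part (ii): [ln M(theta) - mu theta^2 / sigma^2] is nondecreasing on [theta <= 0]
    and vanishes at 0. *)
Lemma M_upper_nonpos (n : nat) (p theta : R) : (2 <= n)%nat -> 0 < p < 1 -> theta <= 0 ->
  M n p theta <= exp (mu n p * theta ^ 2 / sigma2 n p).
Proof.
  intros Hn Hp Hth; pose proof (sigma2_pos n p Hn Hp).
  rewrite <- (exp_ln (M n p theta)) by (apply M_pos; lra); apply exp_mono.
  enough (ln (M n p theta) - mu n p * theta ^ 2 / sigma2 n p
          <= ln (M n p 0) - mu n p * 0 ^ 2 / sigma2 n p)
    by (rewrite M_0, ln_1 in *; unfold Rdiv in *; simpl in *; lra).
  apply (nondecreasing_of_deriv (fun x => ln (M n p x) - mu n p * x ^ 2 / sigma2 n p)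
           (fun x => Mder n p x / M n p x - 2 * mu n p * x / sigma2 n p)); auto.
  - intros x _; apply (is_derive_minus (fun x => ln (M n p x)) (fun x => mu n p * x ^ 2 / sigma2 n p)).
    + apply lnM_derive; lra.
    + auto_derive; auto; field; lra.
  - intros x Hx; pose proof (logM_slope_lower n p x Hn Hp ltac:(lra)); lra.
Qed.

Lemma chernoff (n : nat) (p theta a : R) (E : list bool -> Prop)
  (dec : forall g, {E g} + {~ E g}) : 0 <= p <= 1 ->
  (forall g, E g -> a <= theta * Zstd n p g) ->
  Expect n p (fun g => if dec g then 1 else 0) <= exp (- a) * M n p theta.
Proof.
  intros Hp Hevent; unfold M; rewrite !Expect_Eb, <- Eb_scal.
  apply Eb_le; auto; intros g _; rewrite <- exp_plus; destruct (dec g) as [HE | _].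
  - pose proof (exp_ineq1_le (- a + theta * Zstd n p g)); specialize (Hevent g HE); lra.
  - left; apply exp_pos.
Qed.

Theorem theorem1p1 (n : nat) (p : R) (hn : (2 <= n)%nat) (hp0 : 0 < p) (hp1 : p < 1) :
  (forall theta (htheta : 0 <= theta)
          (pr : Riemann_integrable (H_integrand n p) 0 theta),
      M n p theta <= exp (H n p theta pr))
  /\
  (forall t, 0 < t ->
     forall theta (htheta : 0 <= theta)
            (pr : Riemann_integrable (H_integrand n p) 0 theta),
       Expect n p (fun g => if Rle_dec t (Zstd n p g) then 1 else 0)
       <= exp (- theta * t + H n p theta pr))
  /\
  (forall theta, theta <= 0 ->
      M n p theta <= exp (mu n p * theta ^ 2 / sigma2 n p))
  /\
  (forall t, 0 < t ->
       Expect n p (fun g => if Rle_dec (Zstd n p g) (- t) then 1 else 0)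
       <= exp (- (t ^ 2 * sigma2 n p) / (4 * mu n p))).
Proof.
  assert (Hp : 0 < p < 1) by lra.
  pose proof (sigma2_pos n p hn Hp) as Hs2; pose proof (mu_pos n p hn Hp) as Hmu.
  assert (Hupper : forall theta (htheta : 0 <= theta)
                     (pr : Riemann_integrable (H_integrand n p) 0 theta),
             M n p theta <= exp (H n p theta pr)).
  { intros theta Hth pr; unfold H; rewrite <- RInt_Reals.
    rewrite <- (exp_ln (M n p theta)) by (apply M_pos; lra).
    apply exp_mono, logM_upper; auto. }
  repeat split.
  - exact Hupper.
  - intros t Ht theta Hth pr; rewrite exp_plus.
    apply Rle_trans with (exp (- (theta * t)) * M n p theta).
    + apply chernoff; [lra|]; intros g Hg; apply Rmult_le_compat_l; auto.
    + replace (- theta * t) with (- (theta * t)) by ring.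
      apply Rmult_le_compat_l; [left; apply exp_pos | apply Hupper; auto].
  - intros theta Hth; apply M_upper_nonpos; auto.
  - intros t Ht; set (theta := - (t * sigma2 n p / (2 * mu n p))).
    assert (Hth : theta <= 0).
    { assert (0 < t * sigma2 n p / (2 * mu n p)) by (apply Rdiv_lt_0_compat; nra).
      unfold theta; lra. }
    apply Rle_trans with (exp (- (- theta * t)) * exp (mu n p * theta ^ 2 / sigma2 n p)).
    + eapply Rle_trans; [apply (chernoff n p theta (- theta * t)); [lra|]|].
      * intros g Hg; nra.
      * apply Rmult_le_compat_l; [left; apply exp_pos | apply M_upper_nonpos; auto].
    + rewrite <- exp_plus; right; f_equal; unfold theta; field; lra.
Qed.
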